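(* Let $M_{inf}=\begin{bmatrix}1&0&0&1\\1&1&0&1\end{bmatrix}$. The polyomino class $Av_{\mathfrak{P}}(M_{inf})$ has an infinite $p$-basis.
   Context: A polyomino is a finite union of unit cells of $\mathbb{Z}\times\mathbb{Z}$ that is connected via edge adjacency, up to translation. It is identified with the binary matrix of its minimal bounding rectangle: placing it in the positive quarter plane touching both axes, entry $(i,j)$ is $1$ iff the unit square $[j-1,j]\times[i-1,i]$ is a cell (rows numbered from bottom to top; in displayed matrices the first written row is the top row). A matrix $M'$ is a submatrix of $M$ if it is obtained by deleting rows and/or columns; the pattern order on polyominoes is the submatrix order restricted to polyominoes. $Av_{\mathfrak{P}}(M)$ is the set of polyominoes not containing $M$ as a submatrix; it is a polyomino class (downward closed set). The $p$-basis of a polyomino class $\mathcal{C}$ is the set of polyominoes not in $\mathcal{C}$ that are minimal for the pattern order among polyominoes not in $\mathcal{C}$. *)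

From mathcomp Require Import all_boot.
Set Implicit Arguments. Unset Strict Implicit. Unset Printing Implicit Defensive.

(* A binary matrix is stored as the list of its rows, in DISPLAY order
   (first row = top row), each row being the list of its entries left to right.
   The submatrix order is invariant under reversing the row order, so this
   convention is harmless. *)
Definition bmatrix := seq (seq bool).

Definition cell (M : bmatrix) (i j : nat) : bool := nth false (nth [::] M i) j.

Definition width (M : bmatrix) : nat := size (head [::] M).

Definition rectangular (M : bmatrix) : bool := all (fun r => size r == width M) M.

Definition adj (a b : nat * nat) : bool :=
  ((a.1 == b.1) && ((a.2 == b.2.+1) || (b.2 == a.2.+1))) ||
  ((a.2 == b.2) && ((a.1 == b.1.+1) || (b.1 == a.1.+1))).

Definition cells_connected (M : bmatrix) : Prop :=
  forall i j i' j', cell M i j -> cell M i' j' ->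
    exists p : seq (nat * nat),
      [/\ path adj (i, j) p, last (i, j) p = (i', j')
        & all (fun c => cell M c.1 c.2) p].

(* M is (the matrix of) a polyomino: a nonempty rectangular 0/1 matrix whose
   cells are connected, and which is the minimal bounding rectangle of its
   cells (every row and every column contains a cell). *)
Definition is_polyomino (M : bmatrix) : Prop :=
  [/\ rectangular M, has (has id) M, all (has id) M,
      (forall j, j < width M -> exists i, cell M i j)
    & cells_connected M].

Definition submatrix (N M : bmatrix) : Prop :=
  exists (rm cm : bitseq), N = map (mask cm) (mask rm M).

Definition Av (M : bmatrix) (P : bmatrix) : Prop :=
  is_polyomino P /\ ~ submatrix M P.

Definition in_pbasis (C : bmatrix -> Prop) (P : bmatrix) : Prop :=
  [/\ is_polyomino P, ~ C P &
      forall Q, is_polyomino Q -> submatrix Q P -> Q <> P -> C Q].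

Definition M_inf : bmatrix :=
  [:: [:: true; false; false; true];
      [:: true; true;  false; true]].

From mathcomp Require Import all_boot.
From mathcomp Require Import zify.
Set Implicit Arguments. Unset Strict Implicit. Unset Printing Implicit Defensive.

(* The polyominoes [stair h], h > 3, are pairwise distinct elements of the
   p-basis.  [stair h] is a simple path of 3h cells: from the bottom cell of its
   second column it climbs the full first column, then descends a staircase of
   dominoes to the bottom-right corner.  Any occurrence of M_inf in a submatrix
   of [stair h] uses the rows h-2, h-1 and columns 0 < 1 < c < h, so it keeps
   both ends of the path, and deleting rows and columns while keeping row h-2
   and columns 1, c cannot shortcut the path outside the first column.  If that
   submatrix is connected, the positions along the path of its cells therefore
   take every value from h to 3h-1; these cells meet every row and column, so
   nothing was deleted. *)

Definition extract (P : bmatrix) (RI CI : seq nat) : bmatrix :=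
  [seq [seq cell P i j | j <- CI] | i <- RI].

Lemma cell_extract P RI CI a b : cell (extract P RI CI) a b =
  [&& a < size RI, b < size CI & cell P (nth 0 RI a) (nth 0 CI b)].
Proof.
rewrite /cell /extract.
have [ha|ha] /= := ltnP a (size RI); last first.
  by rewrite (@nth_default _ [::] _ a) ?size_map //; case: b.
rewrite (nth_map 0) //.
have [hb|hb] /= := ltnP b (size CI); last by rewrite nth_default ?size_map.
by rewrite (nth_map 0).
Qed.

Lemma mask_extract (P : bmatrix) rm cm : rectangular P ->
  map (mask cm) (mask rm P)
  = extract P (mask rm (iota 0 (size P))) (mask cm (iota 0 (width P))).
Proof.
move=> rectP; rewrite -{1}(mkseq_nth [::] P) /mkseq -map_mask -map_comp.
apply/eq_in_map => i /mem_mask; rewrite mem_iota add0n => /= ltiP.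
have /eqP sz_row : size (nth [::] P i) == width P.
  by move/allP: rectP; apply; rewrite mem_nth.
by rewrite -{1}(mkseq_nth false (nth [::] P i)) /mkseq -map_mask sz_row.
Qed.

Lemma submatrix_extract (P Q : bmatrix) : rectangular P -> submatrix Q P ->
  exists RI CI, [/\ subseq RI (iota 0 (size P)), subseq CI (iota 0 (width P))
                  & Q = extract P RI CI].
Proof.
move=> rectP [rm [cm ->]].
exists (mask rm (iota 0 (size P))), (mask cm (iota 0 (width P))).
by rewrite mask_extract // !mask_subseq.
Qed.

Lemma extract_submatrix (P : bmatrix) RI CI : rectangular P ->
  subseq RI (iota 0 (size P)) -> subseq CI (iota 0 (width P)) ->
  submatrix (extract P RI CI) P.
Proof.
by move=> rectP /subseqP [rm _ ->] /subseqP [cm _ ->]; exists rm, cm; rewrite mask_extract.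
Qed.

Lemma extract_full (P : bmatrix) : rectangular P ->
  extract P (iota 0 (size P)) (iota 0 (width P)) = P.
Proof.
move=> rectP; have := mask_extract (nseq (size P) true) (nseq (width P) true) rectP.
rewrite !mask_true ?size_iota // => <-; apply: map_id_in => r rP.
by move/allP: rectP => /(_ r rP) /eqP sz; rewrite mask_true ?sz.
Qed.

Lemma extract_rectangular P RI CI : rectangular (extract P RI CI).
Proof.
case: RI => //= i RI; rewrite /rectangular /width /= size_map eqxx /=.
by apply/allP => _ /mapP [k _ ->]; rewrite size_map.
Qed.

Section SubseqIota.

Variables (n : nat) (s : seq nat).
Hypothesis s_sub : subseq s (iota 0 n).

Lemma subseq_iota_sorted : sorted ltn s.
Proof. by apply: (subseq_sorted ltn_trans s_sub); exact: iota_ltn_sorted. Qed.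

Lemma nth_subseq_iota_lt a : a < size s -> nth 0 s a < n.
Proof.
move=> ha; have : nth 0 s a \in iota 0 n by apply: (mem_subseq s_sub); rewrite mem_nth.
by rewrite mem_iota.
Qed.

Lemma nth_subseq_iota_mono a b : a < size s -> b < size s ->
  (nth 0 s a < nth 0 s b) = (a < b).
Proof.
move=> ha hb; have [ab|ba|->] := ltngtP a b; last by rewrite ltnn.
- exact: (sorted_ltn_nth ltn_trans 0 subseq_iota_sorted).
- apply/negbTE; rewrite -leqNgt ltnW //.
  exact: (sorted_ltn_nth ltn_trans 0 subseq_iota_sorted).
Qed.

Lemma subseq_iota_gap a x : a.+1 < size s -> x \in s ->
  ~~ (nth 0 s a < x < nth 0 s a.+1).
Proof.
move=> ha /(nthP 0) [k hk <-].
rewrite (nth_subseq_iota_mono (ltnW ha) hk) (nth_subseq_iota_mono hk ha); lia.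
Qed.

Lemma subseq_iota_full : (forall i, i < n -> i \in s) -> s = iota 0 n.
Proof.
move=> full; apply/eqP; rewrite -(size_subseq_leqif s_sub) eqn_leq size_subseq //=.
by apply: uniq_leq_size (iota_uniq 0 n) _ => x; rewrite mem_iota => /full.
Qed.

End SubseqIota.

Lemma sorted_subseq_iota n s : sorted ltn s -> all (gtn n) s -> subseq s (iota 0 n).
Proof.
move=> s_sorted /allP s_lt.
suff -> : s = [seq i <- iota 0 n | i \in s] by apply: filter_subseq.
apply: (irr_sorted_eq ltn_trans ltnn) => //.
  by apply: sorted_filter; [exact: ltn_trans | exact: iota_ltn_sorted].
by move=> x; rewrite mem_filter mem_iota; case: (boolP (x \in s)) => // /s_lt.
Qed.

Definition reach (M : bmatrix) (x y : nat * nat) : Prop :=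
  exists p : seq (nat * nat),
    [/\ path adj x p, last x p = y & all (fun c => cell M c.1 c.2) p].

Lemma reach_refl M x : reach M x x.
Proof. by exists [::]. Qed.

Lemma reach_trans M x y z : reach M x y -> reach M y z -> reach M x z.
Proof.
move=> [p [px lp cp]] [q [qy lq cq]]; exists (p ++ q).
by rewrite cat_path last_cat all_cat px lp qy lq cp cq.
Qed.

Lemma reach_adj M x i j : adj x (i, j) -> cell M i j -> reach M x (i, j).
Proof. by move=> xij cij; exists [:: (i, j)]; rewrite /= xij cij. Qed.

Lemma adjC x y : adj x y = adj y x.
Proof. by case: x y => [a b] [c d]; rewrite /adj /=; lia. Qed.

Lemma reach_sym M x y : cell M x.1 x.2 -> reach M x y -> reach M y x.
Proof.
move=> cx [p]; elim: p x cx => [|z p IHp] x cx [/= px lp cp].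
  by rewrite -lp; apply: reach_refl.
case/andP: px => xz pz; case/andP: cp => cz cp.
apply: reach_trans (IHp z cz _) _; first by split.
by case: x cx xz => i j cx xz; apply: reach_adj; rewrite // adjC.
Qed.

Lemma cells_connected_from M x :
  cell M x.1 x.2 -> (forall i j, cell M i j -> reach M x (i, j)) -> cells_connected M.
Proof.
move=> cx reach_x i j i' j' cij ci'j'.
exact: reach_trans (reach_sym cx (reach_x _ _ cij)) (reach_x _ _ ci'j').
Qed.

Lemma path_ivt (T : Type) (e : rel T) (A : pred T) (F : T -> nat) v :
  (forall x y, A x -> A y -> e x y -> F x < v -> F y <= v) ->
  forall x p, A x -> path e x p -> all A p -> F x <= v -> v <= F (last x p) ->
  exists2 z, A z & F z = v.
Proof.
move=> step x p; elim: p x => [|y p IHp] x Ax /=.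
  by move=> _ _ le_Fx_v le_v_Fx; exists x => //; apply/eqP; rewrite eqn_leq le_Fx_v.
case/andP=> exy py /andP [Ay Ap] le_Fx_v le_v_last.
have [lt_Fx_v|gt_Fx_v|<-] := ltngtP (F x) v; last by exists x.
- exact: IHp (step x y Ax Ay exy lt_Fx_v) le_v_last.
- by rewrite leqNgt gt_Fx_v in le_Fx_v.
Qed.

Definition stair_cell (h i j : nat) : bool :=
  (j == 0) || ((i == h.-1) && ((j == 1) || (j == h)))
  || ((i != h.-1) && ((j == i.+1) || (j == i.+2))).

Lemma stair_cellP h i j : reflect
  (j = 0 \/ (i = h.-1 /\ (j = 1 \/ j = h)) \/ (i <> h.-1 /\ (j = i.+1 \/ j = i.+2)))
  (stair_cell h i j).
Proof. by rewrite /stair_cell; apply: (iffP idP); lia. Qed.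

Definition stair (h : nat) : bmatrix := mkseq (fun i => mkseq (stair_cell h i) h.+1) h.

Lemma cell_stair h i j : cell (stair h) i j = [&& i < h, j <= h & stair_cell h i j].
Proof.
rewrite /cell /stair.
have [hi|hi] /= := ltnP i h; last by rewrite (@nth_default _ [::]) ?size_mkseq ?nth_nil.
rewrite nth_mkseq //.
have [hj|hj] /= := leqP j h; first by rewrite nth_mkseq.
by rewrite nth_default ?size_mkseq.
Qed.

Lemma size_stair h : size (stair h) = h.
Proof. exact: size_mkseq. Qed.

Lemma width_stair h : 0 < h -> width (stair h) = h.+1.
Proof. by case: h => // h _; rewrite /width /stair /mkseq /= size_map size_iota. Qed.

Lemma rectangular_stair h : 0 < h -> rectangular (stair h).
Proof. by move=> h0; apply/allP => _ /mapP [i _ ->]; rewrite size_mkseq width_stair. Qed.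

Lemma stair_cell_cell h i j : i < h -> j <= h -> stair_cell h i j -> cell (stair h) i j.
Proof. by move=> hi hj hij; rewrite cell_stair hi hj. Qed.

Section StairPolyomino.

Variable h : nat.
Hypothesis h_gt3 : 3 < h.

Lemma reach_stair_right x i j : reach (stair h) x (i, j) ->
  i < h -> j < h -> stair_cell h i j.+1 -> reach (stair h) x (i, j.+1).
Proof.
move=> xij hi hj hij; apply: reach_trans xij (reach_adj _ (stair_cell_cell _ _ _)) => //.
by rewrite /adj /=; lia.
Qed.

Lemma reach_stair_down x i j : reach (stair h) x (i, j) ->
  i.+1 < h -> j <= h -> stair_cell h i.+1 j -> reach (stair h) x (i.+1, j).
Proof.
move=> xij hi hj hij; apply: reach_trans xij (reach_adj _ (stair_cell_cell _ _ _)) => //.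
by rewrite /adj /=; lia.
Qed.

Lemma reach_stair_col0 i : i < h -> reach (stair h) (0, 0) (i, 0).
Proof.
elim: i => [|i IHi] hi; first exact: reach_refl.
by apply: reach_stair_down (IHi (ltnW hi)) _ _ _ => //; apply/stair_cellP; lia.
Qed.

Lemma reach_stair_diag i : i <= h.-2 ->
  reach (stair h) (0, 0) (i, i.+1) /\ reach (stair h) (0, 0) (i, i.+2).
Proof.
elim: i => [|i IHi] hi.
  have r01 : reach (stair h) (0, 0) (0, 1).
    by apply: reach_stair_right (reach_refl _ _) _ _ _; try apply/stair_cellP; lia.
  by split=> //; apply: reach_stair_right r01 _ _ _; try apply/stair_cellP; lia.
have [_ r] := IHi (ltnW hi).
have r1 : reach (stair h) (0, 0) (i.+1, i.+2).
  by apply: reach_stair_down r _ _ _; try apply/stair_cellP; lia.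
by split=> //; apply: reach_stair_right r1 _ _ _; try apply/stair_cellP; lia.
Qed.

Lemma reach_stair i j : cell (stair h) i j -> reach (stair h) (0, 0) (i, j).
Proof.
rewrite cell_stair => /and3P [hi hj /stair_cellP].
case=> [->|[[ei [->|->]]|[hi' [->|->]]]].
- exact: reach_stair_col0.
- by apply: reach_stair_right (reach_stair_col0 hi) _ _ _; try apply/stair_cellP; lia.
- have [_ r] := reach_stair_diag (leqnn h.-2).
  have -> : (i, h) = (h.-2.+1, h.-2.+2) by congr pair; lia.
  by apply: reach_stair_down r _ _ _; try apply/stair_cellP; lia.
- by have /reach_stair_diag[] : i <= h.-2 by lia.
- by have /reach_stair_diag[] : i <= h.-2 by lia.
Qed.

Lemma stair_polyomino : is_polyomino (stair h).
Proof.
have h0 : 0 < h by lia.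
have rows_nonempty : all (has id) (stair h).
  by apply/allP => _ /mapP [i _ ->]; rewrite /mkseq /= /stair_cell.
split=> //.
- exact: rectangular_stair.
- by case: h h0 rows_nonempty => //= ? _ /andP [].
- move=> j; rewrite width_stair // => hj.
  exists (j - 2); apply: stair_cell_cell; try apply/stair_cellP; lia.
- apply: cells_connected_from (reach_stair); by rewrite /= cell_stair h0.
Qed.

End StairPolyomino.

Lemma Minf_extract_stair h : 3 < h ->
  M_inf = extract (stair h) [:: h.-2; h.-1] [:: 0; 1; 2; h].
Proof.
move=> h_gt3; rewrite /extract /= !cell_stair /stair_cell /M_inf.
by congr [:: [:: _; _; _; _]; [:: _; _; _; _]]; lia.
Qed.

Lemma stair_contains_Minf h : 3 < h -> submatrix M_inf (stair h).
Proof.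
move=> h_gt3; rewrite (Minf_extract_stair h_gt3).
apply: extract_submatrix; first by apply: rectangular_stair; lia.
  by rewrite size_stair; apply: sorted_subseq_iota => /=; lia.
by rewrite width_stair; [apply: sorted_subseq_iota => /=; lia | lia].
Qed.

(* The position of the cell (i, j) along the path [stair h], starting from 0
   at (h-1, 1). *)
Definition stair_level (h i j : nat) : nat :=
  if j == 0 then h - i else if (i == h.-1) && (j == 1) then 0 else h + i + j.

Lemma stair_levelE h i j :
     (j = 0 /\ stair_level h i j = h - i)
  \/ (j <> 0 /\ i = h.-1 /\ j = 1 /\ stair_level h i j = 0)
  \/ (j <> 0 /\ ~ (i = h.-1 /\ j = 1) /\ stair_level h i j = h + i + j).
Proof.
rewrite /stair_level; case: eqP => [|j_neq0]; first by left.
by case: (i =P h.-1) => /=; case: (j =P 1) => /=; lia.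
Qed.

Definition level_close (h u v : nat) : Prop :=
  (v <= u.+1 \/ v <= h) /\ (u <= v.+1 \/ u <= h).

Lemma level_closeC h u v : level_close h u v -> level_close h v u.
Proof. by case. Qed.

Section StairLevel.

Variable h : nat.
Hypothesis h_gt3 : 3 < h.

Lemma stair_level_close_row i j j' c : i < h -> j < j' <= h ->
  stair_cell h i j -> stair_cell h i j' -> ~~ (j < 1 < j') -> ~~ (j < c < j') -> 1 < c < h ->
  level_close h (stair_level h i j) (stair_level h i j').
Proof.
move=> ? ? /stair_cellP ? /stair_cellP ? ? ? ?.
have := stair_levelE h i j; have := stair_levelE h i j'; rewrite /level_close; lia.
Qed.

Lemma stair_level_close_col i i' j : i < i' < h -> j <= h ->
  stair_cell h i j -> stair_cell h i' j -> ~~ (i < h.-2 < i') ->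
  level_close h (stair_level h i j) (stair_level h i' j).
Proof.
move=> ? ? /stair_cellP ? /stair_cellP ? ?.
have := stair_levelE h i j; have := stair_levelE h i' j; rewrite /level_close; lia.
Qed.

Lemma stair_level_row i j r : i < h -> j <= h -> stair_cell h i j -> r < h ->
  stair_level h i j = h + 2 * r + 1 -> i = r.
Proof. move=> ? ? /stair_cellP ? ?; have := stair_levelE h i j; lia. Qed.

Lemma stair_level_col i j c : i < h -> j <= h -> stair_cell h i j -> c <= h ->
  stair_level h i j = h + (2 * c).-1 -> j = c.
Proof. move=> ? ? /stair_cellP ? ?; have := stair_levelE h i j; lia. Qed.

Lemma stair_level_first : stair_level h h.-1 1 = 0.
Proof. by rewrite /stair_level /= eqxx. Qed.

Lemma stair_level_last : stair_level h h.-1 h = h + h.-1 + h.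
Proof. by rewrite /stair_level; case: ifP; [lia | rewrite eqxx /=; case: ifP => //; lia]. Qed.

Lemma stair_Minf_occurrence r s b c d : r < s < h -> b < c < d -> d <= h ->
  ~~ stair_cell h r b -> stair_cell h s b -> ~~ stair_cell h r c -> ~~ stair_cell h s c ->
  stair_cell h r d -> stair_cell h s d ->
  [/\ r = h.-2, s = h.-1, b = 1, d = h & 1 < c < h].
Proof.
move=> rs bcd dh /stair_cellP nrb /stair_cellP sb /stair_cellP nrc /stair_cellP nsc.
move=> /stair_cellP rd /stair_cellP sd.
have es : s = h.-1 by clear nrc nsc; lia.
have ed : d = h by clear nrb nrc nsc rd; lia.
have er : r = h.-2 by clear nrb nrc nsc sb sd; lia.
have eb : b = 1 by clear nrc nsc rd sd; lia.
by split=> //; clear nrb sb nrc nsc rd sd; lia.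
Qed.

End StairLevel.

Section ExtractStair.

Variables (h : nat) (RI CI : seq nat).
Hypotheses (h_gt3 : 3 < h)
  (RI_sub : subseq RI (iota 0 h)) (CI_sub : subseq CI (iota 0 h.+1)).

Local Notation Q := (extract (stair h) RI CI).
Local Notation f := (nth 0 RI).
Local Notation g := (nth 0 CI).

Lemma cell_extract_stair x y :
  cell Q x y = [&& x < size RI, y < size CI & stair_cell h (f x) (g y)].
Proof.
rewrite cell_extract cell_stair; have [hx|] //= := ltnP x; have [hy|] //= := ltnP y.
by rewrite (nth_subseq_iota_lt RI_sub) // -ltnS (nth_subseq_iota_lt CI_sub).
Qed.

Lemma cell_extract_stairP x y : cell Q x y ->
  [/\ x < size RI, y < size CI, f x < h, g y <= h & stair_cell h (f x) (g y)].
Proof.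
rewrite cell_extract_stair => /and3P [hx hy hxy].
by rewrite hx hy hxy (nth_subseq_iota_lt RI_sub) // -ltnS (nth_subseq_iota_lt CI_sub).
Qed.

Lemma extract_stair_Minf : submatrix M_inf Q -> exists x y y' c,
  [/\ h.-2 \in RI, 1 \in CI, c \in CI, 1 < c < h
    & [/\ cell Q x y, cell Q x y', f x = h.-1, g y = 1 & g y' = h]].
Proof.
case/(submatrix_extract (extract_rectangular _ _ _)) => RI' [CI' [sRI' sCI' EM]].
case: RI' sRI' EM => [|x1 [|x2 [|? ?]]] sRI' EM; try by move: (congr1 size EM).
case: CI' sCI' EM => [|y1 [|y2 [|y3 [|y4 [|? ?]]]]] sCI' EM;
  try by move: (congr1 width EM); rewrite /extract /width.
move: EM; rewrite /extract /= => -[_ e12 e13 e14 _ e22 e23 e24].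
have /= /andP [lt_x12 _] := subseq_iota_sorted sRI'.
have /= /and4P [_ lt_y23 lt_y34 _] := subseq_iota_sorted sCI'.
have [x1_lt y4_lt _ g4_le s14] := cell_extract_stairP (esym e14).
have [x2_lt y2_lt _ _ s22] := cell_extract_stairP (esym e22).
have [_ _ f2_lt _ s24] := cell_extract_stairP (esym e24).
have y3_lt : y3 < size CI by apply: ltn_trans y4_lt.
have nstair x y : x < size RI -> y < size CI -> false = cell Q x y ->
    ~~ stair_cell h (f x) (g y).
  by move=> hx hy; rewrite cell_extract_stair hx hy /= => <-.
have f12 : f x1 < f x2 < h.
  by rewrite f2_lt andbT (nth_subseq_iota_mono RI_sub x1_lt x2_lt).
have g234 : g y2 < g y3 < g y4.
  rewrite (nth_subseq_iota_mono CI_sub y2_lt y3_lt) lt_y23.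
  by rewrite (nth_subseq_iota_mono CI_sub y3_lt y4_lt) lt_y34.
have [ef1 ef2 eg2 eg4 g3_mid] := stair_Minf_occurrence h_gt3 f12 g234 g4_le
  (nstair _ _ x1_lt y2_lt e12) s22 (nstair _ _ x1_lt y3_lt e13) (nstair _ _ x2_lt y3_lt e23)
  s14 s24.
exists x2, y2, y4, (g y3); split=> //.
- by rewrite -ef1 mem_nth.
- by rewrite -eg2 mem_nth.
- exact: mem_nth.
Qed.

Variable c : nat.
Hypotheses (RI_hm2 : h.-2 \in RI) (CI_1 : 1 \in CI) (CI_c : c \in CI) (c_mid : 1 < c < h).

Let level (z : nat * nat) : nat := stair_level h (f z.1) (g z.2).

Lemma level_close_extract_row x y : cell Q x y -> cell Q x y.+1 ->
  level_close h (level (x, y)) (level (x, y.+1)).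
Proof.
move=> /cell_extract_stairP [hx hy fx _ sxy] /cell_extract_stairP [_ hy' _ gy' sxy'].
apply: (stair_level_close_row h_gt3 fx _ sxy sxy' _ (subseq_iota_gap CI_sub hy' CI_c) c_mid).
  by rewrite gy' andbT (nth_subseq_iota_mono CI_sub hy hy').
exact (subseq_iota_gap CI_sub hy' CI_1).
Qed.

Lemma level_close_extract_col x y : cell Q x y -> cell Q x.+1 y ->
  level_close h (level (x, y)) (level (x.+1, y)).
Proof.
move=> /cell_extract_stairP [hx _ _ gy sxy] /cell_extract_stairP [hx' _ fx' _ sxy'].
apply: (stair_level_close_col h_gt3 _ gy sxy sxy' (subseq_iota_gap RI_sub hx' RI_hm2)).
by rewrite fx' andbT (nth_subseq_iota_mono RI_sub hx hx').
Qed.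

(* Keeping row h-2 and columns 1 and c rules out every shortcut of the path,
   except inside the first column and at its start, where levels are <= h. *)
Lemma level_close_extract z z' : cell Q z.1 z.2 -> cell Q z'.1 z'.2 -> adj z z' ->
  level_close h (level z) (level z').
Proof.
case: z z' => [x y] [x' y'] /= cz cz'.
rewrite /adj /= => /orP [/andP [/eqP ex /orP [/eqP ey|/eqP ey]]
                       | /andP [/eqP ey /orP [/eqP ex|/eqP ex]]]; subst.
- exact/level_closeC/level_close_extract_row.
- exact: level_close_extract_row.
- exact/level_closeC/level_close_extract_col.
- exact: level_close_extract_col.
Qed.

Lemma extract_stair_levels x y x' y' v : cells_connected Q ->
  cell Q x y -> cell Q x' y' -> level (x, y) <= v <= level (x', y') -> h <= v ->
  exists2 z, cell Q z.1 z.2 & level z = v.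
Proof.
move=> connQ cxy cxy' /andP [lo hi] hv; have [p [pp lp cp]] := connQ _ _ _ _ cxy cxy'.
have step z z' : cell Q z.1 z.2 -> cell Q z'.1 z'.2 -> adj z z' ->
    level z < v -> level z' <= v.
  move=> cz cz' zz' lt_zv.
  by case: (level_close_extract cz cz' zz') => [[le|le] _]; apply: leq_trans le _.
by apply: (@path_ivt _ _ _ _ _ step (x, y) p cxy pp cp lo); rewrite lp.
Qed.

Lemma extract_stair_full x y y' : cells_connected Q ->
  cell Q x y -> cell Q x y' -> f x = h.-1 -> g y = 1 -> g y' = h -> Q = stair h.
Proof.
move=> connQ cxy cxy' fx gy gy'.
have cover v : h <= v <= h + h.-1 + h -> exists2 z, cell Q z.1 z.2 & level z = v.
  case/andP=> lo hi; apply: (extract_stair_levels connQ cxy cxy') => //.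
  by rewrite /level /= fx gy gy' stair_level_first stair_level_last.
have rows r : r < h -> r \in RI.
  move=> hr; have [|[a b] /= /cell_extract_stairP [ha _ fa gb sab] lab] := cover (h + 2 * r + 1).
    by lia.
  by rewrite -(stair_level_row h_gt3 fa gb sab hr lab) mem_nth.
have cols c' : c' < h.+1 -> c' \in CI.
  move=> hc; have [|[a b] /= /cell_extract_stairP [_ hb fa gb sab] lab] := cover (h + (2 * c').-1).
    by lia.
  by rewrite -(stair_level_col h_gt3 fa gb sab _ lab) ?mem_nth.
rewrite (subseq_iota_full RI_sub rows) (subseq_iota_full CI_sub cols).
have h_gt0 : 0 < h by lia.
rewrite -[in iota 0 h](size_stair h) -[h.+1](width_stair h_gt0).
by rewrite extract_full // rectangular_stair.
Qed.

End ExtractStair.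

Lemma stair_minimal h Q : 3 < h -> is_polyomino Q ->
  submatrix Q (stair h) -> submatrix M_inf Q -> Q = stair h.
Proof.
move=> h_gt3 [_ _ _ _ connQ]; have h_gt0 : 0 < h by lia.
case/(submatrix_extract (rectangular_stair h_gt0)) => RI [CI [sRI sCI EQ]]; subst Q.
rewrite size_stair width_stair // in sRI sCI.
case/(extract_stair_Minf h_gt3 sRI sCI) => x [y [y' [c [RI_hm2 CI_1 CI_c c_mid]]]].
case=> cxy cxy' fx gy gy'.
exact (extract_stair_full h_gt3 sRI sCI RI_hm2 CI_1 CI_c c_mid connQ cxy cxy' fx gy gy').
Qed.

Lemma stair_in_pbasis h : 3 < h -> in_pbasis (Av M_inf) (stair h).
Proof.
move=> h_gt3; split; first exact: stair_polyomino.
  by case=> _; apply; apply: stair_contains_Minf.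
by move=> Q polyQ subQ neqQ; split=> // /(stair_minimal h_gt3 polyQ subQ).
Qed.

Theorem proposition10 :
  ~ exists s : seq bmatrix, forall P : bmatrix, in_pbasis (Av M_inf) P -> P \in s.
Proof.
case=> s basis_in_s; set m := \max_(P <- s) size P.
have stair_in_s : stair m.+4 \in s by apply/basis_in_s/stair_in_pbasis.
have := @leq_bigmax_seq _ s predT size _ stair_in_s isT.
by rewrite size_stair -/m; lia.
Qed.
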